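(* Let $W\subset\mathbb R^d$ be nonempty, closed and convex, $F:\mathbb R^d\to\mathbb R$ convex and differentiable, $\mathbf w_0\in W$, $\mu_0>0$, $J\ge1$, and $\mu_j=2\mu_{j-1}$ for $j=1,\dots,J$. Let $\hat{\mathbf w}_1,\dots,\hat{\mathbf w}_J$ be random points of $W$ with finite second moments. Define $F^{(0)}(\mathbf w)=F(\mathbf w)+\frac{\mu_0}{2}\|\mathbf w-\mathbf w_0\|^2$ and $F^{(j)}(\mathbf w)=F^{(j-1)}(\mathbf w)+\frac{\mu_j}{2}\|\mathbf w-\hat{\mathbf w}_j\|^2$ for $j=1,\dots,J$, and let $\mathbf w_j^\star$ be the (random) minimizer of $F^{(j)}$ over $W$. Suppose that for every $j=1,\dots,J$, $\mathbb E[F^{(j-1)}(\hat{\mathbf w}_j)-F^{(j-1)}(\mathbf w_{j-1}^\star)]\le\delta_j$. Then $$\mathbb E\Big[\Big(\sum_{j=1}^J\mu_j\|\mathbf w_J^\star-\hat{\mathbf w}_j\|\Big)^2\Big]\le16J\sum_{j=1}^J\mu_j\delta_j.$$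
   Context: $\|\cdot\|$ is the Euclidean norm on $\mathbb R^d$. The functions $F^{(j)}$ are random since they depend on the random points $\hat{\mathbf w}_1,\dots,\hat{\mathbf w}_j$; each $F^{(j)}$ is strongly convex, so its minimizer over $W$ exists and is unique. *)

From HB Require Import structures.
From mathcomp Require Import all_boot all_order all_algebra.
From mathcomp Require Import all_classical all_reals all_analysis.
Set Implicit Arguments. Unset Strict Implicit. Unset Printing Implicit Defensive.
Import Order.TTheory GRing.Theory Num.Theory.
Import numFieldNormedType.Exports.
Local Open Scope ring_scope.
Local Open Scope classical_set_scope.

Definition enorm {R : realType} {d : nat} (v : 'rV[R]_d) : R :=
  Num.sqrt (\sum_(i < d) v ord0 i ^+ 2).

Definition convex_fun {R : realType} {d : nat} (F : 'rV[R]_d -> R) : Prop :=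
  forall x y (t : R), 0 <= t -> t <= 1 ->
    F (t *: x + (1 - t) *: y) <= t * F x + (1 - t) * F y.

Fixpoint Freg {R : realType} {d : nat} {T : Type}
  (F : 'rV[R]_d -> R) (mu : nat -> R) (w0 : 'rV[R]_d)
  (what : nat -> T -> 'rV[R]_d) (j : nat) (omega : T) (w : 'rV[R]_d) : R :=
  match j with
  | 0 => F w + mu 0%N / 2 * enorm (w - w0) ^+ 2
  | k.+1 => Freg F mu w0 what k omega w
            + mu k.+1 / 2 * enorm (w - what k.+1 omega) ^+ 2
  end.

From HB Require Import structures.
From mathcomp Require Import all_boot all_order all_algebra.
From mathcomp Require Import all_classical all_reals all_analysis.
From mathcomp Require Import ring lra.
From mathcomp Require Import measurable_realfun.
Set Implicit Arguments. Unset Strict Implicit. Unset Printing Implicit Defensive.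
Import Order.TTheory GRing.Theory Num.Theory.
Import numFieldNormedType.Exports.
Local Open Scope ring_scope.
Local Open Scope classical_set_scope.

(* F^(k) is strongly convex with modulus lam_k = mu_0 + ... + mu_k, so its minimizer
   w*_k satisfies the quadratic growth bound lam_k/2 |w*_k - v|^2 <= F^(k) v - F^(k) w*_k
   on W.  At v = what_j this controls |w*_{j-1} - what_j|^2 by the gap
   F^(j-1)(what_j) - F^(j-1)(w*_{j-1}), and mu_j = 2 mu_{j-1} <= 2 lam_{j-1} turns it into
   mu_j^2 |w*_{j-1} - what_j|^2 <= 4 mu_j gap_j.  Comparing consecutive minimizers gives
   lam_j |w*_j - w*_{j-1}| <= mu_j |w*_{j-1} - what_j|; summing along the chain
   w*_{j-1}, ..., w*_J yields sum_j mu_j |w*_J - what_j| <= 2 sum_j mu_j |w*_{j-1} - what_j|,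
   and (sum_{j<=J} a_j)^2 <= J sum a_j^2 gives the bound pointwise, before integration.
   Integrability needs measurability in omega: each w*_k depends Lipschitz-continuously on
   what_1, ..., what_k, and a function that is sequentially continuous in finitely many
   measurable real coordinates is measurable. *)

Section Euclidean.
Variables (R : realType) (d : nat).
Implicit Types (u v w p q : 'rV[R]_d) (a b : R).

Definition sqnorm v : R := \sum_(i < d) v ord0 i ^+ 2.
Definition dotv u v : R := \sum_(i < d) u ord0 i * v ord0 i.

Lemma sqnorm_ge0 v : 0 <= sqnorm v.
Proof. by apply: sumr_ge0 => i _; rewrite sqr_ge0. Qed.

Lemma enorm_ge0 v : 0 <= enorm v.
Proof. exact: sqrtr_ge0. Qed.

Lemma enorm0 : enorm (0 : 'rV[R]_d) = 0.
Proof. by rewrite /enorm big1 ?sqrtr0 // => i _; rewrite mxE expr0n. Qed.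

Lemma sqr_enorm v : enorm v ^+ 2 = sqnorm v.
Proof. by rewrite /enorm sqr_sqrtr // sqnorm_ge0. Qed.

Lemma sqnorm_lincomb a b u v :
  sqnorm (a *: u + b *: v) = a ^+ 2 * sqnorm u + 2 * a * b * dotv u v + b ^+ 2 * sqnorm v.
Proof.
rewrite /sqnorm /dotv !mulr_sumr -!big_split /=; apply: eq_bigr => i _.
by rewrite !mxE; ring.
Qed.

Lemma sqnormD u v : sqnorm (u + v) = sqnorm u + 2 * dotv u v + sqnorm v.
Proof. by have := sqnorm_lincomb 1 1 u v; rewrite !scale1r; lra. Qed.

Lemma sqnormB u v : sqnorm (u - v) = sqnorm u - 2 * dotv u v + sqnorm v.
Proof. by have := sqnorm_lincomb 1 (-1) u v; rewrite !scale1r scaleN1r; lra. Qed.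

Lemma sqnorm_distC u v : sqnorm (u - v) = sqnorm (v - u).
Proof. by apply: eq_bigr => i _; rewrite !mxE -sqrrN opprB. Qed.

Lemma sqnorm_convex_comb u v p t :
  sqnorm (t *: u + (1 - t) *: v - p) =
  t * sqnorm (u - p) + (1 - t) * sqnorm (v - p) - t * (1 - t) * sqnorm (u - v).
Proof.
rewrite /sqnorm !mulr_sumr -big_split -sumrB /=; apply: eq_bigr => i _.
by rewrite !mxE; ring.
Qed.

Lemma sqnorm_polarization u v p q :
  sqnorm (u - q) - sqnorm (u - p) - sqnorm (v - q) + sqnorm (v - p) =
  2 * dotv (u - v) (p - q).
Proof.
rewrite /sqnorm /dotv mulr_sumr -!sumrB -big_split /=; apply: eq_bigr => i _.
by rewrite !mxE; ring.
Qed.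

Lemma sqr_dotv_le u v : dotv u v ^+ 2 <= sqnorm u * sqnorm v.
Proof.
have [v0|v_neq0] := eqVneq (sqnorm v) 0.
  have vi0 i : v ord0 i = 0.
    apply/eqP; rewrite -sqrf_eq0; apply/eqP.
    by apply: (psumr_eq0P _ v0) => // j _; exact: sqr_ge0.
  by rewrite v0 mulr0 /dotv big1 ?expr0n // => i _; rewrite vi0 mulr0.
have v_gt0 : 0 < sqnorm v by rewrite lt_def v_neq0 sqnorm_ge0.
have := sqnorm_ge0 (sqnorm v *: u + (- dotv u v) *: v).
rewrite sqnorm_lincomb -(pmulr_rge0 _ v_gt0) => h.
by rewrite -(ler_pM2l v_gt0) -subr_ge0; nra.
Qed.

Lemma dotv_le_enorm u v : dotv u v <= enorm u * enorm v.
Proof.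
rewrite /enorm -sqrtrM ?sqnorm_ge0 //.
apply: le_trans (ler_wsqrtr (sqr_dotv_le u v)).
by rewrite sqrtr_sqr ler_norm.
Qed.

Lemma enorm_distC u v : enorm (u - v) = enorm (v - u).
Proof. by rewrite /enorm -!/(sqnorm _) sqnorm_distC. Qed.

Lemma enorm_le_sqr v b : 0 <= b -> sqnorm v <= b ^+ 2 -> enorm v <= b.
Proof.
move=> b0 h; rewrite /enorm -/(sqnorm v).
by apply: le_trans (ler_wsqrtr h) _; rewrite sqrtr_sqr ger0_norm.
Qed.

Lemma ler_enormD u v : enorm (u + v) <= enorm u + enorm v.
Proof.
apply: enorm_le_sqr; first by rewrite addr_ge0 ?enorm_ge0.
by rewrite sqnormD sqrrD !sqr_enorm; have := dotv_le_enorm u v; lra.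
Qed.

Lemma ler_enorm_distD u v w : enorm (u - w) <= enorm (u - v) + enorm (v - w).
Proof. by apply: le_trans (ler_enormD _ _); rewrite addrA subrK. Qed.

Lemma ler_coord_enorm v i : `|v ord0 i| <= enorm v.
Proof.
rewrite /enorm -sqrtr_sqr; apply: ler_wsqrtr.
by rewrite (bigD1 i) //= lerDl; apply: sumr_ge0 => j _; exact: sqr_ge0.
Qed.

End Euclidean.

Lemma sqr_sum_le (R : realType) (m n : nat) (f : nat -> R) :
  (\sum_(m <= i < n) f i) ^+ 2 <= (n - m)%:R * \sum_(m <= i < n) f i ^+ 2.
Proof.
set S := \sum_(m <= i < n) f i ^+ 2.
have inner i : \sum_(m <= j < n) (f i ^+ 2 + f j ^+ 2) = (n - m)%:R * f i ^+ 2 + S.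
  by rewrite big_split /= sumr_const_nat mulr_natl.
have -> : (n - m)%:R * S = \sum_(m <= i < n) \sum_(m <= j < n) (f i ^+ 2 + f j ^+ 2) / 2.
  under eq_bigr do rewrite -mulr_suml inner.
  rewrite -mulr_suml big_split /= -mulr_sumr sumr_const_nat -/S -mulr_natl.
  by field.
rewrite expr2 mulr_suml; apply: ler_sum => i _; rewrite mulr_sumr.
apply: ler_sum => j _; rewrite ler_pdivlMr //.
by have := sqr_ge0 (f i - f j); rewrite sqrrB; lra.
Qed.

Section CoordinateConvergence.
Variables (R : realType) (d : nat).
Implicit Types (v w : nat -> 'rV[R]_d) (a b : 'rV[R]_d).

Definition cvg_coord v a := forall l, v n ord0 l @[n --> \oo] --> a ord0 l.

Lemma cvg_coord_cst a : cvg_coord (fun=> a) a.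
Proof. by move=> l; exact: cvg_cst. Qed.

Lemma cvg_coordB v w a b : cvg_coord v a -> cvg_coord w b ->
  cvg_coord (fun n => v n - w n) (a - b).
Proof.
move=> va wb l; rewrite !mxE.
have -> : (fun n => (v n - w n) ord0 l) = (fun n => v n ord0 l - w n ord0 l).
  by apply: funext => n; rewrite !mxE.
exact: cvgB.
Qed.

Lemma cvg_sumr (I : eqType) (s : seq I) (f : I -> nat -> R) (b : I -> R) :
  (forall i, i \in s -> f i n @[n --> \oo] --> b i) ->
  \sum_(i <- s) f i n @[n --> \oo] --> \sum_(i <- s) b i.
Proof.
move=> fb; rewrite big_seq; under eq_fun do rewrite big_seq.
by apply: cvg_big => //; exact: add_continuous.
Qed.

Lemma cvg_coord_enorm v a : cvg_coord v a -> enorm (v n) @[n --> \oo] --> enorm a.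
Proof.
move=> va; apply: (continuous_cvg _ (@sqrt_continuous R _)).
apply: cvg_big => [|l _]; first exact: add_continuous.
exact: (continuous_cvg _ (@exprn_continuous R 2 _) (va l)).
Qed.

Lemma cvg_coord_cvg v a : cvg_coord v a -> v n @[n --> \oo] --> a.
Proof.
move=> va; apply/cvgrPdist_lt => e e0.
have := cvg_coord_enorm (cvg_coordB (cvg_coord_cst (a:=a)) va).
rewrite subrr enorm0.
move/cvgrPdist_lt/(_ e e0); apply: filterS => n /=.
rewrite distrC subr0 ger0_norm ?sqrtr_ge0 //; apply: le_lt_trans.
rewrite -[`|_|]/(mx_norm _) mx_normrE; apply: bigmax_le => [|[i l] _ /=].
  exact: sqrtr_ge0.
by rewrite [i]ord1; exact: (ler_coord_enorm (a - v n)).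
Qed.

End CoordinateConvergence.

Section StrongConvexity.
Variables (R : realType) (d : nat).
Implicit Types (G H : 'rV[R]_d -> R) (W : set 'rV[R]_d) (u v p : 'rV[R]_d).

Definition strongly_convex G (lam : R) := forall u v (t : R), 0 <= t -> t <= 1 ->
  G (t *: u + (1 - t) *: v) <=
  t * G u + (1 - t) * G v - lam / 2 * (t * (1 - t)) * sqnorm (u - v).

Lemma convex_fun_strongly_convex0 G : convex_fun G -> strongly_convex G 0.
Proof. by move=> cG u v t t0 t1; have := cG u v t t0 t1; lra. Qed.

Lemma strongly_convex_sqdist (c : R) p :
  strongly_convex (fun w => c / 2 * enorm (w - p) ^+ 2) c.
Proof.
move=> u v t _ _; rewrite !sqr_enorm sqnorm_convex_comb.
by rewrite le_eqVlt; apply/orP; left; apply/eqP; ring.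
Qed.

Lemma strongly_convexD G H lG lH : strongly_convex G lG -> strongly_convex H lH ->
  strongly_convex (fun w => G w + H w) (lG + lH).
Proof.
move=> sG sH u v t t0 t1; have := sG u v t t0 t1; have := sH u v t t0 t1.
have : 0 <= t * (1 - t) * sqnorm (u - v).
  by rewrite mulr_ge0 ?sqnorm_ge0 // mulr_ge0 // subr_ge0.
lra.
Qed.

(* Comparing G a with G at t v + (1 - t) a gives (1 - t) lam/2 |a - v|^2 <= G v - G a
   for every t in (0, 1]; a small enough t rules out G v - G a < lam/2 |a - v|^2. *)
Lemma strongly_convex_growth G lam W a v :
  strongly_convex G lam -> 0 <= lam -> convex_set W ->
  W a -> (forall w, W w -> G a <= G w) -> W v ->
  lam / 2 * sqnorm (a - v) <= G v - G a.
Proof.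
move=> sG lam0 cW Wa amin Wv.
set X := G v - G a; set Y := lam / 2 * sqnorm (a - v).
have step t : 0 < t -> t <= 1 -> (1 - t) * Y <= X.
  move=> t0 t1; rewrite -(ler_pM2l t0).
  have Wt : W (t *: v + (1 - t) *: a).
    have := cW v a (Itv01 (ltW t0) t1) (mem_set Wv) (mem_set Wa).
    by rewrite inE.
  have -> : t * ((1 - t) * Y) = lam / 2 * (t * (1 - t)) * sqnorm (v - a).
    by rewrite /Y sqnorm_distC; ring.
  by have := sG v a t (ltW t0) t1; have := amin _ Wt; rewrite /X; nra.
have Y0 : 0 <= Y by rewrite mulr_ge0 ?sqnorm_ge0 ?divr_ge0.
rewrite leNgt; apply/negP => XY.
have X0 : 0 <= X by rewrite subr_ge0 amin.
have Y_gt0 : 0 < Y by lra.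
have t0 : 0 < (Y - X) / (2 * Y) by apply: divr_gt0; [rewrite subr_gt0 | rewrite mulr_gt0].
have t1 : (Y - X) / (2 * Y) <= 1.
  by rewrite ler_pdivrMr; [lra | rewrite mulr_gt0].
have e : (Y - X) / (2 * Y) * Y = (Y - X) / 2 by field; rewrite gt_eqF.
by have := step _ t0 t1; rewrite mulrBl mul1r e; lra.
Qed.

Lemma strongly_convex_minimizers_dist G H lG lH W a b :
  strongly_convex G lG -> strongly_convex H lH -> 0 <= lG -> 0 <= lH ->
  convex_set W -> W a -> (forall w, W w -> G a <= G w) ->
  W b -> (forall w, W w -> H b <= H w) ->
  (lG + lH) / 2 * sqnorm (a - b) <= (H a - G a) - (H b - G b).
Proof.
move=> sG sH lG0 lH0 cW Wa amin Wb bmin.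
have := strongly_convex_growth sG lG0 cW Wa amin Wb.
have := strongly_convex_growth sH lH0 cW Wb bmin Wa.
rewrite sqnorm_distC; lra.
Qed.

End StrongConvexity.

Lemma ler_of_mul_sqr (R : realFieldType) (c e s : R) :
  0 <= e -> 0 <= s -> c * e ^+ 2 <= e * s -> c * e <= s.
Proof.
move=> e0 s0; have [->|e_neq0] := eqVneq e 0; first by rewrite mulr0.
have e_gt0 : 0 < e by rewrite lt_def e_neq0.
by rewrite expr2 mulrA [e * s]mulrC ler_pM2r.
Qed.

Section RegularizedObjectives.
Variables (R : realType) (d : nat) (T : Type) (F : 'rV[R]_d -> R) (mu : nat -> R)
  (w0 : 'rV[R]_d) (what : nat -> T -> 'rV[R]_d).

Definition Freg_modulus k : R := \sum_(0 <= i < k.+1) mu i.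

Lemma Freg_modulusS k : Freg_modulus k.+1 = Freg_modulus k + mu k.+1.
Proof. by rewrite /Freg_modulus (@big_nat_recr _ _ _ k.+1). Qed.

Lemma sum_mu_le_Freg_modulus k : 0 <= mu 0%N ->
  \sum_(1 <= i < k.+1) mu i <= Freg_modulus k.
Proof. by move=> mu0; rewrite /Freg_modulus [leRHS]big_ltn // lerDr. Qed.

Lemma Freg_strongly_convex k x :
  convex_fun F -> strongly_convex (Freg F mu w0 what k x) (Freg_modulus k).
Proof.
move=> cF; elim: k => [|k IH].
  rewrite /Freg_modulus big_nat1 -[mu 0%N]add0r.
  exact: strongly_convexD (convex_fun_strongly_convex0 cF) (strongly_convex_sqdist _ _).
rewrite Freg_modulusS.
exact: strongly_convexD IH (strongly_convex_sqdist _ _).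
Qed.

Lemma Freg_sub_bound k (x y : T) (a b : 'rV[R]_d) :
  (forall i, (1 <= i <= k)%N -> 0 <= mu i) ->
  (Freg F mu w0 what k y a - Freg F mu w0 what k x a) -
  (Freg F mu w0 what k y b - Freg F mu w0 what k x b) <=
  enorm (a - b) * \sum_(1 <= i < k.+1) mu i * enorm (what i y - what i x).
Proof.
elim: k => [|k IH] mu_ge0 /=; first by rewrite big_geq //= mulr0; lra.
have /IH : forall i, (1 <= i <= k)%N -> 0 <= mu i.
  by move=> i /andP[i1 ik]; apply: mu_ge0; rewrite i1 ltnW.
rewrite (@big_nat_recr _ _ _ k.+1) //= mulrDr.
have pol := sqnorm_polarization a b (what k.+1 x) (what k.+1 y).
have cs := dotv_le_enorm (a - b) (what k.+1 x - what k.+1 y).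
have muk : 0 <= mu k.+1 by apply: mu_ge0; rewrite /= ltnSn.
rewrite !sqr_enorm (enorm_distC (what k.+1 x)) in pol cs *.
set e := enorm (a - b) in cs *; set g := enorm (what k.+1 y - what k.+1 x) in cs *.
have : mu k.+1 * dotv (a - b) (what k.+1 x - what k.+1 y) <= mu k.+1 * (e * g).
  by rewrite ler_wpM2l.
by nra.
Qed.

Lemma Freg_cvg k x (u : nat -> T) v a : continuous F ->
  (forall j, (1 <= j <= k)%N -> cvg_coord (fun n => what j (u n)) (what j x)) ->
  cvg_coord v a ->
  Freg F mu w0 what k (u n) (v n) @[n --> \oo] --> Freg F mu w0 what k x a.
Proof.
move=> F_cont + va; have sqdist_cvg w b : cvg_coord w b ->
    enorm (v n - w n) ^+ 2 @[n --> \oo] --> enorm (a - b) ^+ 2.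
  move=> wb; apply: (continuous_cvg _ (@exprn_continuous R 2 _)).
  exact/cvg_coord_enorm/cvg_coordB.
elim: k => [|k IH] what_cvg /=.
  apply: cvgD; first exact: (continuous_cvg _ (F_cont a) (cvg_coord_cvg va)).
  by apply: cvgM; [exact: cvg_cst | exact: sqdist_cvg (cvg_coord_cst (a:=w0))].
apply: cvgD.
  by apply: IH => j /andP[j1 jk]; apply: what_cvg; rewrite j1 ltnW.
apply: cvgM; first exact: cvg_cst.
by apply: sqdist_cvg; apply: what_cvg; rewrite /= ltnSn.
Qed.

End RegularizedObjectives.

Section DoublingWeights.
Variables (R : realType) (mu : nat -> R) (J : nat).
Hypothesis mu0_gt0 : 0 < mu 0%N.
Hypothesis mu_double : forall j, (1 <= j <= J)%N -> mu j = 2 * mu j.-1.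

Lemma mu_ge0 j : (j <= J)%N -> 0 <= mu j.
Proof.
elim: j => [|j IH] jJ; first exact: ltW.
by rewrite mu_double ?jJ // mulr_ge0 // IH // ltnW.
Qed.

Lemma Freg_modulus_gt0 k : (k <= J)%N -> 0 < Freg_modulus mu k.
Proof.
move=> kJ; rewrite /Freg_modulus big_ltn // ltr_pwDl //.
rewrite big_nat_cond; apply: sumr_ge0 => i /andP[/andP[_ ik] _].
by apply: mu_ge0; rewrite (leq_trans (ltnSE ik)).
Qed.

Lemma mu_le_Freg_modulus_pred j : (1 <= j <= J)%N -> mu j <= 2 * Freg_modulus mu j.-1.
Proof.
case: j => [//|k] /andP[_ kJ]; rewrite mu_double ?kJ //= ler_wpM2l //.
rewrite /Freg_modulus big_nat_recr //= lerDr big_nat_cond.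
apply: sumr_ge0 => i /andP[/andP[_ ik] _]; apply: mu_ge0.
by rewrite (leq_trans (ltnW ik) (ltnW kJ)).
Qed.

End DoublingWeights.

Section Minimizers.
Variables (R : realType) (d : nat) (W : set 'rV[R]_d) (F : 'rV[R]_d -> R)
  (w0 : 'rV[R]_d) (mu : nat -> R) (J : nat) (T : Type)
  (what wstar : nat -> T -> 'rV[R]_d).
Hypothesis W_convex : convex_set W.
Hypothesis F_convex : convex_fun F.
Hypothesis mu0_gt0 : 0 < mu 0%N.
Hypothesis mu_double : forall j, (1 <= j <= J)%N -> mu j = 2 * mu j.-1.
Hypothesis what_in_W : forall j x, (1 <= j <= J)%N -> W (what j x).
Hypothesis wstar_min : forall j, (j <= J)%N -> forall x, W (wstar j x) /\
  (forall v, W v -> Freg F mu w0 what j x (wstar j x) <= Freg F mu w0 what j x v).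

Local Notation Fj := (Freg F mu w0 what).

Let mu_ge0 := mu_ge0 mu0_gt0 mu_double.

Let Freg_modulus_ge0 k : (k <= J)%N -> 0 <= Freg_modulus mu k.
Proof. by move=> kJ; exact/ltW/(Freg_modulus_gt0 mu0_gt0 mu_double). Qed.

Definition subopt j x := Fj j.-1 x (what j x) - Fj j.-1 x (wstar j.-1 x).

Lemma subopt_ge0 j x : (1 <= j <= J)%N -> 0 <= subopt j x.
Proof.
move=> /[dup] jJ /andP[_ /(leq_trans (leq_pred j))/wstar_min/(_ x)[_ jmin]].
by rewrite subr_ge0; apply: jmin; exact: what_in_W.
Qed.

Lemma wstar_growth k x v : (k <= J)%N -> W v ->
  Freg_modulus mu k / 2 * sqnorm (wstar k x - v) <= Fj k x v - Fj k x (wstar k x).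
Proof.
move=> kJ Wv; have [Wk kmin] := wstar_min kJ x.
exact: strongly_convex_growth (Freg_strongly_convex mu w0 what k x F_convex)
  (Freg_modulus_ge0 kJ) W_convex Wk kmin Wv.
Qed.

Lemma sqr_dist_le_subopt j x : (1 <= j <= J)%N ->
  mu j ^+ 2 * enorm (wstar j.-1 x - what j x) ^+ 2 <= 4 * mu j * subopt j x.
Proof.
move=> /[dup] jJ /andP[_ /(leq_trans (leq_pred j)) j1J].
have growth := wstar_growth x j1J (what_in_W x jJ); rewrite -sqr_enorm in growth.
have mu_le := mu_le_Freg_modulus_pred mu0_gt0 mu_double jJ.
have muj : 0 <= mu j by apply: mu_ge0; case/andP: jJ.
rewrite /subopt; set D2 := enorm _ ^+ 2 in growth *; set m := Freg_modulus mu j.-1 in growth mu_le.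
have D2_ge0 : 0 <= D2 := sqr_ge0 _.
have h1 : mu j * (mu j * D2) <= mu j * (2 * m * D2) by rewrite ler_wpM2l // ler_wpM2r.
have h2 : mu j * (m / 2 * D2) <= mu j * (Fj j.-1 x (what j x) - Fj j.-1 x (wstar j.-1 x)).
  by rewrite ler_wpM2l.
nra.
Qed.

(* F^(k+1) - F^(k) is the single quadratic term centred at what k.+1. *)
Lemma dist_wstar_step k x : (k < J)%N ->
  Freg_modulus mu k.+1 * enorm (wstar k.+1 x - wstar k x) <=
  mu k.+1 * enorm (wstar k x - what k.+1 x).
Proof.
move=> kJ; have [Wa amin] := wstar_min (ltnW kJ) x; have [Wb bmin] := wstar_min kJ x.
have := strongly_convex_minimizers_dist (Freg_strongly_convex mu w0 what k x F_convex)
  (Freg_strongly_convex mu w0 what k.+1 x F_convex) (Freg_modulus_ge0 (ltnW kJ)) (Freg_modulus_ge0 kJ)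
  W_convex Wa amin Wb bmin => /=.
set a := wstar k x; set b := wstar k.+1 x; set p := what k.+1 x.
have -> : b - p = (a - p) - (a - b) by rewrite opprB [RHS]addrC addrA subrK.
rewrite !sqr_enorm (sqnormB (a - p)) Freg_modulusS -sqr_enorm (enorm_distC a b).
have muk : 0 <= mu k.+1 by exact: mu_ge0.
have cs := dotv_le_enorm (a - p) (a - b); rewrite (enorm_distC a b) in cs.
move=> h; apply: ler_of_mul_sqr; rewrite ?mulr_ge0 ?enorm_ge0 //.
have : mu k.+1 * dotv (a - p) (a - b) <=
    mu k.+1 * (enorm (a - p) * enorm (b - a)) by rewrite ler_wpM2l.
by nra.
Qed.

Lemma sum_dist_wstar_le K x : (K <= J)%N ->
  \sum_(1 <= j < K.+1) mu j * enorm (wstar K x - wstar j.-1 x) <=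
  \sum_(1 <= j < K.+1) mu j * enorm (wstar j.-1 x - what j x).
Proof.
elim: K => [|K IH] KJ; first by rewrite !big_geq.
rewrite (@big_nat_recr _ _ _ K.+1) // [leRHS](@big_nat_recr _ _ _ K.+1) //=.
set e := enorm (wstar K.+1 x - wstar K x).
have tri : \sum_(1 <= j < K.+1) mu j * enorm (wstar K.+1 x - wstar j.-1 x) <=
    (\sum_(1 <= j < K.+1) mu j) * e +
    \sum_(1 <= j < K.+1) mu j * enorm (wstar K x - wstar j.-1 x).
  rewrite mulr_suml -big_split /= big_nat_cond [leRHS]big_nat_cond.
  apply: ler_sum => j /andP[/andP[_ jK] _]; rewrite -mulrDr ler_wpM2l //.
    by apply: mu_ge0; rewrite (leq_trans (ltnW jK)).
  exact: ler_enorm_distD.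
have sum_le : (\sum_(1 <= j < K.+1) mu j + mu K.+1) * e <= Freg_modulus mu K.+1 * e.
  by rewrite ler_wpM2r ?enorm_ge0 // -big_nat_recr //= sum_mu_le_Freg_modulus // ltW.
have := IH (ltnW KJ); have := dist_wstar_step x KJ; rewrite -/e; lra.
Qed.

Lemma sqr_sum_dist_le_subopt x :
  (\sum_(1 <= j < J.+1) mu j * enorm (wstar J x - what j x)) ^+ 2 <=
  16 * J%:R * \sum_(1 <= j < J.+1) mu j * subopt j x.
Proof.
have mu_ge0' j : (1 <= j < J.+1)%N -> 0 <= mu j by case/andP=> _ /mu_ge0.
set X := \sum_(1 <= j < J.+1) mu j * enorm (wstar j.-1 x - what j x).
have sum_le : \sum_(1 <= j < J.+1) mu j * enorm (wstar J x - what j x) <= 2 * X.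
  apply: le_trans (_ : \sum_(1 <= j < J.+1) (mu j * enorm (wstar J x - wstar j.-1 x)
      + mu j * enorm (wstar j.-1 x - what j x)) <= _).
    rewrite big_nat_cond [leRHS]big_nat_cond; apply: ler_sum => j /andP[jJ _].
    by rewrite -mulrDr ler_wpM2l ?mu_ge0' //; exact: ler_enorm_distD.
  by rewrite big_split /=; have := sum_dist_wstar_le x (leqnn J); rewrite -/X; lra.
have sum_ge0 : 0 <= \sum_(1 <= j < J.+1) mu j * enorm (wstar J x - what j x).
  rewrite big_nat_cond; apply: sumr_ge0 => j /andP[jJ _].
  by rewrite mulr_ge0 ?enorm_ge0 ?mu_ge0'.
have sqr_le : \sum_(1 <= j < J.+1) (mu j * enorm (wstar j.-1 x - what j x)) ^+ 2 <=
    4 * \sum_(1 <= j < J.+1) mu j * subopt j x.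
  rewrite mulr_sumr big_nat_cond [leRHS]big_nat_cond; apply: ler_sum => j /andP[jJ _].
  by rewrite exprMn mulrA; exact: sqr_dist_le_subopt.
have := sqr_sum_le 1 J.+1 (fun j => mu j * enorm (wstar j.-1 x - what j x)); rewrite subn1 /= -/X.
have J_ge0 : 0 <= J%:R :> R by [].
nra.
Qed.

Lemma wstar_lipschitz k x y : (k <= J)%N ->
  Freg_modulus mu k * enorm (wstar k y - wstar k x) <=
  \sum_(1 <= i < k.+1) mu i * enorm (what i y - what i x).
Proof.
move=> kJ; have [Wa amin] := wstar_min kJ x; have [Wb bmin] := wstar_min kJ y.
have l_ge0 := Freg_modulus_ge0 kJ.
have := strongly_convex_minimizers_dist (Freg_strongly_convex mu w0 what k x F_convex)
  (Freg_strongly_convex mu w0 what k y F_convex) l_ge0 l_ge0 W_convex Wa amin Wb bmin.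
have mu_ge0' i : (1 <= i <= k)%N -> 0 <= mu i.
  by case/andP=> _ ik; apply: mu_ge0; rewrite (leq_trans ik).
have := Freg_sub_bound F w0 what x y (wstar k x) (wstar k y) mu_ge0'.
rewrite -sqr_enorm (enorm_distC (wstar k x)) => sub_le growth.
apply: ler_of_mul_sqr; rewrite ?enorm_ge0 //.
  rewrite big_nat_cond; apply: sumr_ge0 => i /andP[ik _].
  by rewrite mulr_ge0 ?enorm_ge0 ?mu_ge0'.
by move: growth; rewrite mulrDl -splitr; lra.
Qed.

Lemma wstar_cvg k x (u : nat -> T) : (k <= J)%N ->
  (forall j, (1 <= j <= J)%N -> cvg_coord (fun n => what j (u n)) (what j x)) ->
  cvg_coord (fun n => wstar k (u n)) (wstar k x).
Proof.
move=> kJ what_cvg l; have lam_gt0 := Freg_modulus_gt0 mu0_gt0 mu_double kJ.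
have : \sum_(1 <= i < k.+1) mu i * enorm (what i (u n) - what i x) @[n --> \oo] -->
    \sum_(1 <= i < k.+1) mu i * 0.
  apply: cvg_sumr => i; rewrite mem_index_iota => /andP[i1 ik].
  apply: cvgM; first exact: cvg_cst.
  rewrite -(enorm0 R d) -(subrr (what i x)); apply/cvg_coord_enorm/cvg_coordB.
    by apply: what_cvg; rewrite i1 (leq_trans (ltnSE ik)).
  exact: cvg_coord_cst.
rewrite big1 => [|i _]; last exact: mulr0.
move=> S_cvg; apply/cvgrPdist_lt => e e0.
move/cvgrPdist_lt/(_ (e * Freg_modulus mu k) (mulr_gt0 e0 lam_gt0)): S_cvg.
apply: filterS => n /=; rewrite distrC subr0 => /(le_lt_trans (ler_norm _)) S_lt.
have lip := wstar_lipschitz x (u n) kJ.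
have := ler_coord_enorm (wstar k (u n) - wstar k x) l; rewrite !mxE distrC => coord_le.
apply: le_lt_trans coord_le _; rewrite -(ltr_pM2l lam_gt0) [_ * e]mulrC.
exact: le_lt_trans lip S_lt.
Qed.

End Minimizers.

Section SequentialContinuity.
Variables (d0 : measure_display) (T : measurableType d0) (R : realType)
  (I : finType) (c : I -> T -> R).
Hypothesis c_measurable : forall k, measurable_fun setT (c k).

Definition seq_continuous (h : T -> R) := forall x (u : nat -> T),
  (forall k, c k (u n) @[n --> \oo] --> c k x) -> h (u n) @[n --> \oo] --> h x.

Lemma seq_continuous_local h : seq_continuous h -> forall x e, 0 < e ->
  exists m : nat, forall y,
    (forall k, `|c k y - c k x| < m.+1%:R^-1) -> `|h y - h x| < e.
Proof.
move=> h_cont x e e0; apply: contrapT => no_m.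
have bad m : exists y, (forall k, `|c k y - c k x| < m.+1%:R^-1) /\ e <= `|h y - h x|.
  apply: contrapT => no_y; apply: no_m; exists m => y yx; apply: contrapT => hy.
  by apply: no_y; exists y; split; rewrite // leNgt; apply/negP.
have [u hu] := choice bad.
have /h_cont : forall k, c k (u n) @[n --> \oo] --> c k x.
  move=> k; apply/cvgrPdist_lt => eps eps0.
  apply: filterS (near_infty_natSinv_lt (PosNum eps0)) => n /= n_lt.
  by rewrite distrC; exact: lt_trans ((hu n).1 k) n_lt.
move/cvgrPdist_lt/(_ e e0) => [N _ /(_ N (leqnn N))].
by rewrite distrC ltNge (hu N).2.
Qed.

(* Countably many boxes: rational centre i.1 and radius 1/(i.2 + 1) in the l1 distance
   of the coordinates c. *)
Definition coord_box (i : {ffun I -> rat} * nat) : set T :=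
  [set y | \sum_k `|c k y - ratr (i.1 k)| < i.2.+1%:R^-1].

Lemma coord_box_measurable i : measurable (coord_box i).
Proof.
have /(_ measurableT _ (@measurable_itv _ `]-oo, i.2.+1%:R^-1[%R)) :
    measurable_fun setT (fun y => \sum_(k <- enum I) `|c k y - ratr (i.1 k)|).
  apply: measurable_sum => k; apply: measurableT_comp => //.
  exact: measurable_funB.
rewrite setTI; congr measurable; apply/seteqP; split => y /=;
  by rewrite in_itv /= big_enum.
Qed.

Lemma coord_box_around x m : exists i, coord_box i x /\
  forall y, coord_box i y -> forall k, `|c k y - c k x| < m.+1%:R^-1.
Proof.
set r : R := (m.*2.+2)%:R^-1; set N := #|I|.
have rN_gt0 : 0 < r / N.+1%:R by rewrite divr_gt0 ?invr_gt0 ?ltr0n.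
have close k : exists q : rat, `|c k x - ratr q| < r / N.+1%:R.
  move: rN_gt0; set t := r / N.+1%:R; clearbody t => t_gt0.
  have /rat_in_itvoo[q] : c k x - t < c k x + t by lra.
  rewrite in_itv /= => /andP[q_gt q_lt].
  by exists q; rewrite ltr_norml; apply/andP; split; lra.
have [q q_close] := choice close.
exists ([ffun k => q k], m.*2.+1); split.
  rewrite /coord_box /=; apply: (@le_lt_trans _ _ (\sum_(k : I) r / N.+1%:R)).
    by apply: ler_sum => k _; rewrite ffunE ltW.
  rewrite sumr_const -/N -/r -(mulr_natr (r / N.+1%:R) N) -mulrA gtr_pMr ?invr_gt0 ?ltr0n //.
  by rewrite mulrC ltr_pdivrMr ?ltr0n // mul1r ltr_nat.
move=> y /= y_box k.
have coord_le z : `|c k z - ratr (q k)| <= \sum_k' `|c k' z - ratr ([ffun k => q k] k')|.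
  by rewrite (bigD1 k) //= ffunE lerDl sumr_ge0.
have -> : m.+1%:R^-1 = r + r :> R.
  by rewrite /r -doubleS -mul2n natrM; field; rewrite nat1r pnatr_eq0.
apply: le_lt_trans (ler_distD (ratr (q k)) _ _) _; apply: ltrD.
  exact: le_lt_trans (coord_le y) y_box.
rewrite distrC; apply: lt_le_trans (q_close k) _.
by rewrite ler_pdivrMr ?ltr0n // ler_peMr ?invr_ge0 ?ler1n.
Qed.

Lemma seq_continuous_measurable h : seq_continuous h -> measurable_fun setT h.
Proof.
move=> h_cont; apply: (measurability _ (RGenOInfty.measurableE R)) => //.
move=> /= A [B [a ->] <-]; rewrite preimage_itvoy.
pose inside i := forall y, coord_box i y -> a < h y.
rewrite [X in measurable X](_ : _ = \bigcup_(i : {ffun I -> rat} * nat)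
    (if pselect (inside i) then coord_box i else set0)).
  apply: countable_bigcupT_measurable => // i.
  by case: pselect => _ /=; [exact: coord_box_measurable|].
apply/seteqP; split => [x [_ /= ax]|y [i _]]; last first.
  by case: pselect => /= i_in // y_box; split => //; exact: i_in.
have e_gt0 : 0 < h x - a by rewrite subr_gt0.
have [m hm] := seq_continuous_local h_cont x e_gt0.
have [i [x_box i_close]] := coord_box_around x m.
exists i => //; case: pselect => // not_inside; apply: not_inside => y y_box.
by have := hm y (i_close y y_box); rewrite distrC ltr_norml => /andP[_]; lra.
Qed.

End SequentialContinuity.

Lemma seq_continuous_rV_measurable (d0 : measure_display) (T : measurableType d0)
    (R : realType) (d J : nat) (X : nat -> T -> 'rV[R]_d) (h : T -> R) :
  (forall j, (1 <= j <= J)%N -> forall i : 'I_d, measurable_fun setT (fun x => X j x ord0 i)) ->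
  (forall x (u : nat -> T),
     (forall j, (1 <= j <= J)%N -> cvg_coord (fun n => X j (u n)) (X j x)) ->
     h (u n) @[n --> \oo] --> h x) ->
  measurable_fun setT h.
Proof.
move=> X_meas h_cont.
pose c (k : 'I_J * 'I_d) x := X k.1.+1 x ord0 k.2.
apply: (@seq_continuous_measurable _ _ _ _ c) => [k|x u cu].
  by apply: X_meas; rewrite /= ltn_ord.
apply: h_cont => j /andP[j1 jJ] l.
have jJ' : (j.-1 < J)%N by rewrite prednK.
by have := cu (Ordinal jJ', l); rewrite /c /= prednK.
Qed.

Local Open Scope ereal_scope.

Lemma integral_le_weighted_sum (d0 : measure_display) (T : measurableType d0)
    (R : realType) (P : {measure set T -> \bar R}) (g : T -> R) (f : nat -> T -> R)
    (a delta : nat -> R) (C : R) (m n : nat) :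
  (0 <= C)%R -> measurable_fun setT g ->
  (forall j, (m <= j < n)%N -> measurable_fun setT (f j)) ->
  (forall j x, (m <= j < n)%N -> 0 <= f j x)%R ->
  (forall j, (m <= j < n)%N -> 0 <= a j)%R ->
  (forall j, (m <= j < n)%N -> \int[P]_x (f j x)%:E <= (delta j)%:E) ->
  (forall x, 0 <= g x <= C * \sum_(m <= j < n) a j * f j x)%R ->
  \int[P]_x (g x)%:E <= (C * \sum_(m <= j < n) a j * delta j)%:E.
Proof.
move=> C_ge0 g_meas f_meas f_ge0 a_ge0 f_int g_bound.
pose fa j x : R := (if (m <= j < n)%N then a j * f j x else 0)%R.
have fa_meas j : measurable_fun setT (fa j).
  rewrite /fa; case jmn: (m <= j < n)%N; last exact: measurable_cst.
  by apply: measurable_funM; [exact: measurable_cst | exact: f_meas].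
have fa_ge0 j x : (0 <= fa j x)%R.
  by rewrite /fa; case: ifP => // jmn; rewrite mulr_ge0 ?f_ge0 ?a_ge0.
have sum_fa x : (\sum_(m <= j < n) a j * f j x = \sum_(m <= j < n) fa j x)%R.
  by apply: eq_big_nat => j jmn; rewrite /fa jmn.
apply: (@le_trans _ _ (\int[P]_x (C%:E * \sum_(m <= j < n) (fa j x)%:E))).
  apply: ge0_le_integral => //.
  - by move=> x _; rewrite lee_fin (andP (g_bound x)).1.
  - exact/measurable_EFinP.
  - under eq_fun do rewrite sumEFin -EFinM.
    by apply/measurable_EFinP/measurable_funM => //; exact: measurable_sum.
  by move=> x _; rewrite sumEFin -EFinM lee_fin -sum_fa (andP (g_bound x)).2.
rewrite ge0_integralZl_EFin //; last 2 first.
- by move=> x _; rewrite sumEFin lee_fin sumr_ge0.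
- under eq_fun do rewrite sumEFin.
  by apply/measurable_EFinP; exact: measurable_sum.
rewrite ge0_integral_sum //; last 2 first.
- by move=> j; exact/measurable_EFinP.
- by move=> j x _; rewrite lee_fin.
rewrite EFinM -sumEFin lee_wpmul2l ?lee_fin // big_nat_cond [leRHS]big_nat_cond.
apply: lee_sum => j; rewrite andbT => jmn.
rewrite (eq_integral (fun x => (a j)%:E * (f j x)%:E)) => [|x _]; last by rewrite /fa jmn EFinM.
rewrite ge0_integralZl_EFin ?a_ge0 //; last 2 first.
- by move=> x _; rewrite lee_fin f_ge0.
- exact/measurable_EFinP/f_meas.
by rewrite EFinM lee_wpmul2l ?lee_fin ?a_ge0 ?f_int.
Qed.

Local Close Scope ereal_scope.

Unset Implicit Arguments.

Theorem lemmaC1 (R : realType) (d : nat) (W : set 'rV[R]_d)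
  (F : 'rV[R]_d -> R) (w0 : 'rV[R]_d) (mu : nat -> R) (J : nat)
  (dT : measure_display) (T : measurableType dT) (P : probability T R)
  (what : nat -> T -> 'rV[R]_d) (wstar : nat -> T -> 'rV[R]_d)
  (delta : nat -> R) :
  W !=set0 -> closed W -> convex_set W ->
  convex_fun F -> (forall x, differentiable F x) ->
  W w0 -> 0 < mu 0%N -> (1 <= J)%N ->
  (forall j, (1 <= j <= J)%N -> mu j = 2 * mu j.-1) ->
  (forall j, (1 <= j <= J)%N ->
     (forall i : 'I_d, measurable_fun setT (fun x => what j x ord0 i)) /\
     (forall x, W (what j x)) /\
     P.-integrable setT (fun x => ((enorm (what j x)) ^+ 2)%:E)) ->
  (forall j, (j <= J)%N -> forall x,
     W (wstar j x) /\
     (forall v, W v -> Freg F mu w0 what j x (wstar j x)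
                       <= Freg F mu w0 what j x v)) ->
  (forall j, (1 <= j <= J)%N ->
     (\int[P]_x (Freg F mu w0 what j.-1 x (what j x)
                 - Freg F mu w0 what j.-1 x (wstar j.-1 x))%:E
      <= (delta j)%:E)%E) ->
  (\int[P]_x ((\sum_(1 <= j < J.+1) mu j * enorm (wstar J x - what j x)) ^+ 2)%:E
   <= (16 * J%:R * \sum_(1 <= j < J.+1) mu j * delta j)%:E)%E.
Proof.
(* The minimizers are given and every integrand is nonnegative. *)
move=> _ _ W_convex F_convex F_diff _ mu0_gt0 _ mu_double what_rv wstar_min subopt_int.
have what_in_W j x : (1 <= j <= J)%N -> W (what j x) by move=> /what_rv[_ []].
have what_meas j : (1 <= j <= J)%N -> forall i : 'I_d,
  measurable_fun setT (fun x => what j x ord0 i) by move=> /what_rv[].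
have F_cont : continuous F by move=> w; exact: differentiable_continuous.
have wstar_cvg := wstar_cvg W_convex F_convex mu0_gt0 mu_double wstar_min.
apply: (integral_le_weighted_sum (f := subopt F w0 mu what wstar)).
- by rewrite mulr_ge0.
- apply: (seq_continuous_rV_measurable what_meas) => x u what_cvg.
  apply: (continuous_cvg _ (@exprn_continuous R 2 _)).
  apply: cvg_sumr => j; rewrite mem_index_iota => jJ.
  apply: cvgM; first exact: cvg_cst.
  by apply/cvg_coord_enorm/cvg_coordB; [exact: wstar_cvg | exact: what_cvg].
- move=> j /andP[j1 jJ]; apply: (seq_continuous_rV_measurable what_meas) => x u what_cvg.
  have j1J : (j.-1 <= J)%N by rewrite (leq_trans (leq_pred j)).
  have what_cvg' i : (1 <= i <= j.-1)%N ->
      cvg_coord (fun n => what i (u n)) (what i x).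
    by case/andP=> i1 ij; apply: what_cvg; rewrite i1 (leq_trans ij).
  apply: cvgB; apply: (Freg_cvg F_cont what_cvg').
    by apply: what_cvg; rewrite j1.
  exact: wstar_cvg.
- by move=> j x jJ; exact: (subopt_ge0 what_in_W wstar_min x).
- by move=> j /andP[_ jJ]; apply: (mu_ge0 mu0_gt0 mu_double); rewrite -ltnS.
- exact: subopt_int.
move=> x; rewrite sqr_ge0 /=.
exact: (sqr_sum_dist_le_subopt W_convex F_convex mu0_gt0 mu_double what_in_W wstar_min).
Qed.
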